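(* Let $\mathbf R_s\in\mathcal R([e,\ell];\theta_s)$ for all $s\in\mathcal S$. Consider the mixed-integer linear program: minimize $\delta$ over $\delta\ge 0$, $\bm a_s\in\mathcal X(\mathbf R_s,[e,\ell];\theta_s)$ ($s\in\mathcal S$), and, for each $i\in V_{\mathrm{disc}}$, variables $\bar\mu_i,\underline\mu_i\ge0$ and $z_{ib}\in\{0,1\}$ ($b=1,\dots,N_i$), subject to: $\sum_{b=1}^{N_i}z_{ib}=1$ for each $i\in V_{\mathrm{disc}}$; for all $i\in V_{\mathrm{disc}}$, $s\in\mathcal S$, $b\in\{1,\dots,N_i\}$: $z_{ib}=1\Rightarrow \bar\mu_i\ge a_{si}-\bar y_{ib}$ and $z_{ib}=1\Rightarrow\underline\mu_i\ge \underline y_{ib}-a_{si}$; $\delta\ge a_{s_1i}-a_{s_2i}-w_i$ for all $i\in V_{\mathrm{cont}}$ and $(s_1,s_2)\in\mathcal S\times\mathcal S$; and $\delta\ge\sum_{i\in V_{\mathrm{disc}}}(\bar\mu_i+\underline\mu_i)$. Then this problem attains its minimum, and its optimal value equals $0$ if and only if there exist $\bm a_s\in\mathcal X(\mathbf R_s,[e,\ell];\theta_s)$, $s\in\mathcal S$, satisfying: (i) for every $i\in V_{\mathrm{cont}}$ and $\beta\in\mathbb R$: either $a_{si}\le\beta+w_i/2$ for all $s$, or $a_{si}\ge\beta-w_i/2$ for all $s$; and (ii) for every $i\in V_{\mathrm{disc}}$ and $b\in\{1,\dots,N_i-1\}$: either $a_{si}\le\bar y_{ib}$ for all $s$, or $a_{si}\ge\underline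 y_{i,b+1}$ for all $s$.
   Context: Let $G=(V,A)$ be a directed graph with $V=\{0,1,\dots,n\}$; node $0$ is the depot and $V_C=V\setminus\{0\}$ is the set of customers. The depot has operating window $[e_0,\ell_0]$, vehicles have capacity $Q$, and each customer $i\in V_C$ has an exogenous time window $[e_i,\ell_i]$. A vector of operational parameters $\theta$ consists of arc costs $c_{ij}\ge 0$ and arc travel times $t_{ij}\ge0$ for $(i,j)\in A$, and demands $q_i\ge 0$ and service times $u_i\ge 0$ for $i\in V_C$. The customer set is partitioned as $V_C=V_{\mathrm{cont}}\cup V_{\mathrm{disc}}$ (disjoint). For $i\in V_{\mathrm{cont}}$ a width $w_i\ge0$ with $e_i\le \ell_i-w_i$ is given and $TW_i=\{[y,y+w_i]: e_i\le y\le \ell_i-w_i\}$. For $i\in V_{\mathrm{disc}}$, $TW_i=\{[\underline y_{i1},\bar y_{i1}],\dots,[\underline y_{iN_i},\bar y_{iN_i}]\}$ is a finite set of intervals with $\underline y_{ib}\le\bar y_{ib}$, none contained in another, ordered so that $e_i=\underline y_{i1}<\dots<\underline y_{iN_i}$ and $\bar y_{i1}<\dots<\bar y_{iN_i}=\ell_i$. A route set $\mathbf R=(R_1,\dots,R_m)$ is a collection of pairwise disjoint nonempty sequences $R_k=(R_{k,1},\dots,R_{k,n_k})$ of distinct customers (every customer with positive demand appearing in exactly one sequence). For a vector $\tau=(\tau_1,\dots,\tau_n)$ of closed intervals, $\mathcal X(\mathbf R,\tau;\theta)$ is the set of $\bm a\in\mathbb R^n_{\ge0}$ with: $a_{R_{k,1}}\ge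 e_0+t_{0,R_{k,1}}$ for all $k$; $a_{R_{k,l+1}}-a_{R_{k,l}}\ge t_{R_{k,l},R_{k,l+1}}+u_{R_{k,l}}$ for all $k$ and $1\le l\le n_k-1$; $a_{R_{k,n_k}}\le \ell_0-t_{R_{k,n_k},0}-u_{R_{k,n_k}}$ for all $k$; and $a_i\in\tau_i$ for all $i\in V_C$. We write $\mathbf R\in\mathcal R(\tau;\theta)$ if $\sum_{i\in R_k}q_i\le Q$ for every $k$ and $\mathcal X(\mathbf R,\tau;\theta)\neq\emptyset$. Finitely many scenarios $\theta_1,\dots,\theta_S$ are given, $\mathcal S=\{1,\dots,S\}$. $[e,\ell]$ denotes the vector $([e_1,\ell_1],\dots,[e_n,\ell_n])$, and $a_{si}$ denotes the $i$-th component of $\bm a_s$. *)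

From Stdlib Require Import Reals List.
Import ListNotations.
Open Scope R_scope.

(* Customers are the nodes 1..n; node 0 is the depot. *)
Definition is_cust (n i : nat) : Prop := (1 <= i <= n)%nat.

Record param := mkParam {
  cost  : nat -> nat -> R;
  ttime : nat -> nat -> R;
  dem   : nat -> R;
  serv  : nat -> R }.

Definition param_ok (n : nat) (th : param) : Prop :=
  (forall i j, (i <= n)%nat -> (j <= n)%nat -> 0 <= cost th i j /\ 0 <= ttime th i j) /\
  (forall i, is_cust n i -> 0 <= dem th i /\ 0 <= serv th i).

Definition sumR (l : list R) : R := fold_right Rplus 0 l.

Definition route_set (n : nat) (q : nat -> R) (Rs : list (list nat)) : Prop :=
  (forall r, In r Rs -> r <> []) /\
  (forall r i, In r Rs -> In i r -> is_cust n i) /\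
  NoDup (concat Rs) /\
  (forall i, is_cust n i -> 0 < q i -> In i (concat Rs)).

Fixpoint chain_ok (th : param) (a : nat -> R) (r : list nat) : Prop :=
  match r with
  | x :: ((y :: _) as r') =>
      a y - a x >= ttime th x y + serv th x /\ chain_ok th a r'
  | _ => True
  end.

Definition route_ok (e0 l0 : R) (th : param) (a : nat -> R) (r : list nat) : Prop :=
  match r with
  | [] => True
  | x :: _ =>
      a x >= e0 + ttime th 0%nat x /\
      chain_ok th a r /\
      a (last r 0%nat) <= l0 - ttime th (last r 0%nat) 0%nat - serv th (last r 0%nat)
  end.

(* a in X(R, tau; theta), with tau_i = [lo i, hi i]; a is indexed by customers 1..n *)
Definition inX (n : nat) (e0 l0 : R) (th : param) (Rs : list (list nat))
  (lo hi : nat -> R) (a : nat -> R) : Prop :=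
  (forall i, is_cust n i -> 0 <= a i) /\
  (forall r, In r Rs -> route_ok e0 l0 th a r) /\
  (forall i, is_cust n i -> lo i <= a i <= hi i).

Definition in_calR (n : nat) (Q e0 l0 : R) (th : param) (lo hi : nat -> R)
  (Rs : list (list nat)) : Prop :=
  route_set n (dem th) Rs /\
  (forall r, In r Rs -> sumR (map (dem th) r) <= Q) /\
  exists a, inX n e0 l0 th Rs lo hi a.

(* Time-window data: disc i = true iff i in V_disc (else i in V_cont).
   w i : width for continuous customers; N i, ylo i b, yhi i b (b = 1..N i)
   for discrete customers. *)
Definition tw_ok (n : nat) (e l : nat -> R) (disc : nat -> bool) (w : nat -> R)
  (N : nat -> nat) (ylo yhi : nat -> nat -> R) : Prop :=
  (forall i, is_cust n i -> disc i = false -> 0 <= w i /\ e i <= l i - w i) /\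
  (forall i, is_cust n i -> disc i = true ->
     (1 <= N i)%nat /\
     (forall b, (1 <= b <= N i)%nat -> ylo i b <= yhi i b) /\
     (forall b b', (1 <= b)%nat -> (b < b')%nat -> (b' <= N i)%nat ->
        ylo i b < ylo i b' /\ yhi i b < yhi i b') /\
     e i = ylo i 1%nat /\ yhi i (N i) = l i).

Definition is_scen (S s : nat) : Prop := (1 <= s <= S)%nat.

Definition milp_feasible (n : nat) (e0 l0 : R) (e l : nat -> R)
  (disc : nat -> bool) (w : nat -> R) (N : nat -> nat) (ylo yhi : nat -> nat -> R)
  (S : nat) (theta : nat -> param) (Rs : nat -> list (list nat))
  (delta : R) (a : nat -> nat -> R) (muhi mulo : nat -> R) (z : nat -> nat -> R) : Prop :=
  0 <= delta /\
  (forall s, is_scen S s -> inX n e0 l0 (theta s) (Rs s) e l (a s)) /\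
  (forall i, is_cust n i -> disc i = true ->
     0 <= muhi i /\ 0 <= mulo i /\
     (forall b, (1 <= b <= N i)%nat -> z i b = 0 \/ z i b = 1) /\
     sumR (map (z i) (seq 1 (N i))) = 1) /\
  (forall i s b, is_cust n i -> disc i = true -> is_scen S s -> (1 <= b <= N i)%nat ->
     z i b = 1 -> muhi i >= a s i - yhi i b) /\
  (forall i s b, is_cust n i -> disc i = true -> is_scen S s -> (1 <= b <= N i)%nat ->
     z i b = 1 -> mulo i >= ylo i b - a s i) /\
  (forall i s1 s2, is_cust n i -> disc i = false -> is_scen S s1 -> is_scen S s2 ->
     delta >= a s1 i - a s2 i - w i) /\
  delta >= sumR (map (fun i => muhi i + mulo i) (filter disc (seq 1 n))).

Definition consistent (n : nat) (disc : nat -> bool) (w : nat -> R) (N : nat -> nat)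
  (ylo yhi : nat -> nat -> R) (S : nat) (a : nat -> nat -> R) : Prop :=
  (forall i, is_cust n i -> disc i = false -> forall beta : R,
     (forall s, is_scen S s -> a s i <= beta + w i / 2) \/
     (forall s, is_scen S s -> a s i >= beta - w i / 2)) /\
  (forall i, is_cust n i -> disc i = true -> forall b, (1 <= b <= N i - 1)%nat ->
     (forall s, is_scen S s -> a s i <= yhi i b) \/
     (forall s, is_scen S s -> a s i >= ylo i (Datatypes.S b))).

(* For a fixed family [a] of arrival-time vectors, the least feasible [delta] of the
   MILP is [mismatch a], the maximum of the largest excess [a_{s1,i} - a_{s2,i} - w_i]
   over continuous customers and of the sum over discrete customers of the excess of
   the best single window (the binaries [z] select that window).  So the MILP value is
   the minimum of [mismatch] over the feasible families, and this minimum is attained: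
   [mismatch] is continuous and, once the irrelevant coordinates are pinned to [0], the
   feasible families form a closed subset of a product of compact intervals
   (Tychonoff).  Finally [mismatch a = 0] says that scenarios differ by at most [w_i]
   on continuous customers, which is condition (i), and share a window on discrete
   customers, which for ordered windows is condition (ii). *)

From Stdlib Require Import Reals List Lra Lia Classical IndefiniteDescription.
From mathcomp Require Import ssreflect ssrbool.
Open Scope R_scope.

(* [maxl l] is the maximum of [0] and the entries of [l], so [maxl (map f l)]
   is the largest positive part of [f] on [l]. *)
Definition maxl (l : list R) : R := fold_right Rmax 0 l.
Definition minl (x0 : R) (l : list R) : R := fold_right Rmin x0 l.

Lemma maxl_ge0 l : 0 <= maxl l.
Proof. elim: l => [|x l IH] /=; [lra | exact: Rle_trans IH (Rmax_r _ _)]. Qed.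

Lemma maxl_lub l c : (forall x, In x l -> x <= c) -> 0 <= c -> maxl l <= c.
Proof.
elim: l => [|x l IH] /= Hl Hc //.
by apply: Rmax_lub; [apply: Hl; left | apply: IH => // y Hy; apply: Hl; right].
Qed.

Lemma maxl_ub l x : In x l -> x <= maxl l.
Proof.
elim: l => [|y l IH] //= [<-|Hx]; first exact: Rmax_l.
exact: Rle_trans (IH Hx) (Rmax_r _ _).
Qed.

Lemma minl_lb x0 l x : In x l -> minl x0 l <= x.
Proof.
elim: l => [|y l IH] //= [<-|Hx]; first exact: Rmin_l.
exact: Rle_trans (Rmin_r _ _) (IH Hx).
Qed.

Lemma minl_map_attained {A : Type} (h : A -> R) x0 L :
  exists k, (k = x0 \/ In k L) /\ minl (h x0) (map h L) = h k.
Proof.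
elim: L => [|x L [k [Hk IH]]] /=; first by exists x0; auto.
rewrite IH; case: (Rle_dec (h x) (h k)) => Hxk.
- by exists x; split; [right; left | apply: Rmin_left].
- exists k; split; last by apply: Rmin_right; lra.
  by case: Hk; [left | right; right].
Qed.

Lemma sumR_le {A : Type} (f g : A -> R) l :
  (forall x, In x l -> f x <= g x) -> sumR (map f l) <= sumR (map g l).
Proof.
elim: l => [|x l IH] /= Hfg; first lra.
apply: Rplus_le_compat; [apply: Hfg; left | apply: IH => y Hy; apply: Hfg; right] => //.
Qed.

Lemma sumR_ge0 {A : Type} (f : A -> R) l :
  (forall x, In x l -> 0 <= f x) -> 0 <= sumR (map f l).
Proof.
elim: l => [|x l IH] /= Hf; first lra.
have := Hf x (in_eq _ _); have := IH (fun y Hy => Hf y (or_intror Hy)); lra.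
Qed.

Lemma sumR_le0 {A : Type} (f : A -> R) l :
  (forall x, In x l -> f x <= 0) -> sumR (map f l) <= 0.
Proof.
elim: l => [|x l IH] /= Hf; first lra.
have := Hf x (in_eq _ _); have := IH (fun y Hy => Hf y (or_intror Hy)); lra.
Qed.

Lemma le_sumR_term {A : Type} (f : A -> R) l x :
  (forall y, In y l -> 0 <= f y) -> In x l -> f x <= sumR (map f l).
Proof.
elim: l => [|y l IH] //= Hf [<-|Hx].
- have := sumR_ge0 f l (fun z Hz => Hf z (or_intror Hz)); lra.
- have := Hf y (in_eq _ _); have := IH (fun z Hz => Hf z (or_intror Hz)) Hx; lra.
Qed.

Lemma sumR_binary_eq1 (z : nat -> R) L :
  (forall b, In b L -> z b = 0 \/ z b = 1) -> sumR (map z L) = 1 ->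
  exists b, In b L /\ z b = 1.
Proof.
elim: L => [|x L IH] /= Hz Hsum; first lra.
case: (Hz x (in_eq _ _)) => Hx; last by exists x; auto.
have [|b [Hb Hzb]] := IH (fun b Hb => Hz b (or_intror Hb)); first lra.
by exists b; auto.
Qed.

Lemma sumR_indicator (k : nat) L :
  NoDup L -> In k L -> sumR (map (fun b => if Nat.eqb b k then 1 else 0) L) = 1.
Proof.
have Hnotin L' : ~ In k L' -> sumR (map (fun b => if Nat.eqb b k then 1 else 0) L') = 0.
  elim: L' => [|x L' IH] //= Hk.
  case: (Nat.eqb_spec x k) => [Hx|_]; first by case: Hk; left.
  have := IH (fun H => Hk (or_intror H)); lra.
elim: L => [|x L IH] //= /NoDup_cons_iff [HxL Hnd] Hk.
case: (Nat.eqb_spec x k) => [Hx|Hx].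
- by subst x; rewrite Hnotin //; lra.
- case: Hk => [Hk|Hk]; first by [].
  rewrite IH //=; lra.
Qed.

Lemma in_seq1 k m : In k (seq 1 m) <-> (1 <= k <= m)%nat.
Proof. rewrite in_seq; lia. Qed.

Lemma splits_everywhere_iff_spread_le {I : Type} (P : I -> Prop) (x : I -> R) (w : R) :
  (forall beta, (forall s, P s -> x s <= beta + w / 2) \/
                (forall s, P s -> x s >= beta - w / 2)) <->
  (forall s1 s2, P s1 -> P s2 -> x s1 - x s2 <= w).
Proof.
split=> [Hsplit s1 s2 P1 P2 | Hspread beta].
- by case: (Hsplit ((x s1 + x s2) / 2)) => H; [have := H s1 P1 | have := H s2 P2]; lra.
- case: (classic (forall s, P s -> x s <= beta + w / 2)) => [|Hnot]; first by left.
  right=> s Ps.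
  have [s0 Hs0] := not_all_ex_not _ _ Hnot.
  have [P0 _] := imply_to_and _ _ Hs0.
  have := Hspread s0 s P0 Ps; lra.
Qed.

Section Windows.

Variables (K : nat) (lo hi : nat -> R).
Hypothesis windows_mono : forall b b', (1 <= b)%nat -> (b < b')%nat -> (b' <= K)%nat ->
  lo b <= lo b' /\ hi b <= hi b'.

Lemma separated_of_common_window {I : Type} (P : I -> Prop) (x : I -> R) b0 :
  (1 <= b0 <= K)%nat -> (forall s, P s -> lo b0 <= x s <= hi b0) ->
  forall b, (1 <= b <= K - 1)%nat ->
  (forall s, P s -> x s <= hi b) \/ (forall s, P s -> x s >= lo (S b)).
Proof.
move=> Hb0 Hx b Hb.
case: (Compare_dec.le_lt_dec b0 b) => Hbb; [left | right] => s Ps; have := Hx s Ps.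
- case: (Nat.eq_dec b0 b) => [<-|Hne]; first lra.
  have [_] := windows_mono b0 b ltac:(lia) ltac:(lia) ltac:(lia); lra.
- case: (Nat.eq_dec (S b) b0) => [->|Hne]; first lra.
  have [] := windows_mono (S b) b0 ltac:(lia) ltac:(lia) ltac:(lia); lra.
Qed.

Lemma common_window_of_separated {I : Type} (P : I -> Prop) (x : I -> R) :
  (1 <= K)%nat -> (forall s, P s -> lo 1%nat <= x s <= hi K) ->
  (forall b, (1 <= b <= K - 1)%nat ->
     (forall s, P s -> x s <= hi b) \/ (forall s, P s -> x s >= lo (S b))) ->
  exists b, (1 <= b <= K)%nat /\ forall s, P s -> lo b <= x s <= hi b.
Proof.
move=> HK Hrange Hsep.
have Hsweep k : (1 <= k <= K)%nat ->
  (exists b, (1 <= b <= K)%nat /\ forall s, P s -> lo b <= x s <= hi b) \/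
  (forall s, P s -> lo k <= x s).
{ elim: k => [|k IH] Hk; first lia.
  case: (Nat.eq_dec k 0) => [->|Hk0]; first by right=> s Ps; case: (Hrange s Ps).
  case: (IH ltac:(lia)) => [Hfound|Habove]; first by left.
  case: (Hsep k ltac:(lia)) => [Hbelow|Hnext].
  - by left; exists k; split; [lia | move=> s Ps; split; [apply: Habove | apply: Hbelow]].
  - by right=> s Ps; apply: Rge_le; apply: Hnext. }
case: (Hsweep K ltac:(lia)) => [//|Habove].
by exists K; split; [lia | move=> s Ps; split; [apply: Habove | case: (Hrange s Ps)]].
Qed.

End Windows.

Section Mismatch.

Variables (n S : nat) (disc : nat -> bool) (w : nat -> R) (N : nat -> nat)
  (ylo yhi : nat -> nat -> R).
Implicit Types (a : nat -> nat -> R) (f : nat -> R).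

Definition max_scen f : R := maxl (map f (seq 1 S)).

Lemma max_scen_ge0 f : 0 <= max_scen f.
Proof. exact: maxl_ge0. Qed.

Lemma le_max_scen f s : is_scen S s -> f s <= max_scen f.
Proof. by move=> Hs; apply: maxl_ub; apply: in_map; apply/in_seq1. Qed.

Lemma max_scen_lub f c : (forall s, is_scen S s -> f s <= c) -> 0 <= c -> max_scen f <= c.
Proof.
move=> Hf; apply: maxl_lub => _ /in_map_iff [s [<- /in_seq1 Hs]]; exact: Hf.
Qed.

Definition spread_excess a : R :=
  maxl (map (fun i => max_scen (fun s1 => max_scen (fun s2 => a s1 i - a s2 i - w i)))
            (filter (fun i => negb (disc i)) (seq 1 n))).

Lemma in_cont_customers i :
  In i (filter (fun i => negb (disc i)) (seq 1 n)) <-> is_cust n i /\ disc i = false.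
Proof. rewrite filter_In in_seq1 /is_cust; case: (disc i) => /=; intuition congruence. Qed.

Lemma in_disc_customers i : In i (filter disc (seq 1 n)) <-> is_cust n i /\ disc i = true.
Proof. by rewrite filter_In in_seq1. Qed.

Lemma spread_excess_ub a i s1 s2 :
  is_cust n i -> disc i = false -> is_scen S s1 -> is_scen S s2 ->
  a s1 i - a s2 i - w i <= spread_excess a.
Proof.
move=> Hi Hd Hs1 Hs2.
apply: Rle_trans (maxl_ub _ _ (in_map _ _ i (proj2 (in_cont_customers i) (conj Hi Hd)))).
apply: Rle_trans (le_max_scen _ s1 Hs1).
exact: (le_max_scen (fun s2 => a s1 i - a s2 i - w i) s2 Hs2).
Qed.

Lemma spread_excess_lub a c :
  (forall i s1 s2, is_cust n i -> disc i = false -> is_scen S s1 -> is_scen S s2 ->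
     a s1 i - a s2 i - w i <= c) ->
  0 <= c -> spread_excess a <= c.
Proof.
move=> Hc c0; apply: maxl_lub => // _ /in_map_iff [i [<- /in_cont_customers [Hi Hd]]].
apply: max_scen_lub => // s1 Hs1; apply: max_scen_lub => // s2 Hs2; exact: Hc.
Qed.

Lemma spread_excess_le0_iff a :
  spread_excess a <= 0 <->
  (forall i, is_cust n i -> disc i = false -> forall beta : R,
     (forall s, is_scen S s -> a s i <= beta + w i / 2) \/
     (forall s, is_scen S s -> a s i >= beta - w i / 2)).
Proof.
have Hsplit i := splits_everywhere_iff_spread_le (is_scen S) (fun s => a s i) (w i).
split=> [Ha i Hi Hd | Hcons].
- apply/Hsplit => s1 s2 Hs1 Hs2.
  have := spread_excess_ub a i s1 s2 Hi Hd Hs1 Hs2; lra.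
- apply: spread_excess_lub; last lra.
  move=> i s1 s2 Hi Hd Hs1 Hs2.
  have := proj1 (Hsplit i) (Hcons i Hi Hd) s1 s2 Hs1 Hs2; lra.
Qed.

Definition window_excess a i b : R :=
  max_scen (fun s => a s i - yhi i b) + max_scen (fun s => ylo i b - a s i).

Lemma window_excess_ge0 a i b : 0 <= window_excess a i b.
Proof.
have := max_scen_ge0 (fun s => a s i - yhi i b).
have := max_scen_ge0 (fun s => ylo i b - a s i).
rewrite /window_excess; lra.
Qed.

Lemma window_excess_le a i b mh ml :
  (forall s, is_scen S s -> a s i - yhi i b <= mh) ->
  (forall s, is_scen S s -> ylo i b - a s i <= ml) ->
  0 <= mh -> 0 <= ml -> window_excess a i b <= mh + ml.
Proof.
move=> Hhi Hlo mh0 ml0.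
by apply: Rplus_le_compat; apply: max_scen_lub.
Qed.

Lemma window_excess_le0_iff a i b :
  window_excess a i b <= 0 <-> forall s, is_scen S s -> ylo i b <= a s i <= yhi i b.
Proof.
split=> [Ha s Hs | Hin].
- have := le_max_scen (fun s => a s i - yhi i b) s Hs.
  have := le_max_scen (fun s => ylo i b - a s i) s Hs.
  have := max_scen_ge0 (fun s => a s i - yhi i b).
  have := max_scen_ge0 (fun s => ylo i b - a s i).
  rewrite /window_excess in Ha; lra.
- rewrite -(Rplus_0_r 0); apply: window_excess_le; try lra;
    move=> s Hs; have := Hin s Hs; lra.
Qed.

(* The default [window_excess a i 1] of [minl] is one of the listed values as soon as
   [N i >= 1]. *)
Definition best_window_excess a i : R :=
  minl (window_excess a i 1) (map (window_excess a i) (seq 1 (N i))).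

Lemma best_window_excess_le a i b :
  (1 <= b <= N i)%nat -> best_window_excess a i <= window_excess a i b.
Proof. by move=> Hb; apply: minl_lb; apply: in_map; apply/in_seq1. Qed.

Lemma best_window_excess_attained a i :
  (1 <= N i)%nat ->
  exists b, (1 <= b <= N i)%nat /\ best_window_excess a i = window_excess a i b.
Proof.
move=> HN; have [b [Hb Hmin]] := minl_map_attained (window_excess a i) 1%nat (seq 1 (N i)).
by exists b; split=> //; case: Hb => [->|/in_seq1]; first lia.
Qed.

Lemma best_window_excess_ge0 a i : 0 <= best_window_excess a i.
Proof.
have [b [_ Hmin]] := minl_map_attained (window_excess a i) 1%nat (seq 1 (N i)).
rewrite /best_window_excess Hmin; exact: window_excess_ge0.
Qed.

Definition disc_excess a : R := sumR (map (best_window_excess a) (filter disc (seq 1 n))).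

(* The optimal value of the MILP with the arrival times fixed to [a]. *)
Definition mismatch a : R := Rmax (spread_excess a) (disc_excess a).

Lemma mismatch_ge0 a : 0 <= mismatch a.
Proof. exact: Rle_trans (maxl_ge0 _) (Rmax_l _ _). Qed.

Lemma mismatch_eq_on a a' :
  (forall s i, is_scen S s -> is_cust n i -> a s i = a' s i) -> mismatch a = mismatch a'.
Proof.
move=> Haa'.
have Hscen f f' : (forall s, is_scen S s -> f s = f' s) -> max_scen f = max_scen f'.
{ by move=> Hff'; rewrite /max_scen; f_equal; apply: map_ext_in => s /in_seq1; apply: Hff'. }
rewrite /mismatch /spread_excess /disc_excess; f_equal; f_equal.
- apply: map_ext_in => i /in_cont_customers [Hi _].
  by apply: (Hscen) => s1 Hs1; apply: Hscen => s2 Hs2; rewrite !Haa'.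
- apply: map_ext_in => i /in_disc_customers [Hi _].
  have Hwin b : window_excess a i b = window_excess a' i b.
  { by rewrite /window_excess; f_equal; apply: Hscen => s Hs; rewrite Haa'. }
  by rewrite /best_window_excess Hwin; f_equal; apply: map_ext_in => b _.
Qed.

Variables (e l : nat -> R).
Hypothesis Htw : tw_ok n e l disc w N ylo yhi.

Lemma disc_excess_le0_iff a :
  (forall s i, is_scen S s -> is_cust n i -> e i <= a s i <= l i) ->
  disc_excess a <= 0 <->
  (forall i, is_cust n i -> disc i = true -> forall b, (1 <= b <= N i - 1)%nat ->
     (forall s, is_scen S s -> a s i <= yhi i b) \/
     (forall s, is_scen S s -> a s i >= ylo i (Datatypes.S b))).
Proof.
move=> Hrange.
have Hwindows i : is_cust n i -> disc i = true ->
  (1 <= N i)%nat /\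
  (forall b b', (1 <= b)%nat -> (b < b')%nat -> (b' <= N i)%nat ->
     ylo i b <= ylo i b' /\ yhi i b <= yhi i b') /\
  (forall s, is_scen S s -> ylo i 1%nat <= a s i <= yhi i (N i)).
{ move=> Hi Hd; have [HN [_ [Hord [He Hl]]]] := proj2 Htw i Hi Hd.
  split=> //; split=> [b b' Hb Hbb' Hb' | s Hs].
  - by have := Hord b b' Hb Hbb' Hb'; lra.
  - by rewrite -He Hl; apply: Hrange. }
split=> [Hsum i Hi Hd | Hsep].
- have [HN [Hmono _]] := Hwindows i Hi Hd.
  have [b [Hb Hbest]] := best_window_excess_attained a i HN.
  apply: (separated_of_common_window (N i) (ylo i) (yhi i) Hmono _ (fun s => a s i) b Hb).
  apply/window_excess_le0_iff; rewrite -Hbest.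
  apply: Rle_trans (le_sumR_term _ _ i _ _) Hsum.
  + by move=> *; apply: best_window_excess_ge0.
  + exact/in_disc_customers.
- apply: sumR_le0 => i /in_disc_customers [Hi Hd].
  have [HN [_ Hin]] := Hwindows i Hi Hd.
  have [b [Hb Hcommon]] :=
    common_window_of_separated (N i) (ylo i) (yhi i) _ (fun s => a s i) HN Hin (Hsep i Hi Hd).
  apply: Rle_trans (best_window_excess_le a i b Hb) _.
  exact/window_excess_le0_iff.
Qed.

Lemma mismatch_le0_iff a :
  (forall s i, is_scen S s -> is_cust n i -> e i <= a s i <= l i) ->
  mismatch a <= 0 <-> consistent n disc w N ylo yhi S a.
Proof.
move=> Hrange; rewrite /consistent -spread_excess_le0_iff -disc_excess_le0_iff //.
split=> [Ha | [Hspread Hdisc]]; last exact: Rmax_lub.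
split; apply: Rle_trans Ha; [exact: Rmax_l | exact: Rmax_r].
Qed.

Section MILP.

Variables (e0 l0 : R) (theta : nat -> param) (Rs : nat -> list (list nat)).

Lemma mismatch_le_milp delta a muhi mulo z :
  milp_feasible n e0 l0 e l disc w N ylo yhi S theta Rs delta a muhi mulo z ->
  mismatch a <= delta.
Proof.
move=> [Hdelta [_ [Hdisc [Hhi [Hlo [Hcont Hsum]]]]]].
apply: Rmax_lub.
- by apply: spread_excess_lub => // *; apply: Rge_le; apply: Hcont.
- apply: Rle_trans (Rge_le _ _ Hsum); apply: sumR_le => i /in_disc_customers [Hi Hd].
  have [mh0 [ml0 [H01 Hz]]] := Hdisc i Hi Hd.
  have [b [/in_seq1 Hb Hzb]] :=
    sumR_binary_eq1 (z i) (seq 1 (N i)) (fun b Hb => H01 b (proj1 (in_seq1 b (N i)) Hb)) Hz.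
  apply: Rle_trans (best_window_excess_le a i b Hb) _.
  by apply: window_excess_le => // s Hs; apply: Rge_le; [apply: Hhi | apply: Hlo].
Qed.

Lemma milp_feasible_mismatch a :
  (forall s, is_scen S s -> inX n e0 l0 (theta s) (Rs s) e l (a s)) ->
  exists muhi mulo z,
    milp_feasible n e0 l0 e l disc w N ylo yhi S theta Rs (mismatch a) a muhi mulo z.
Proof.
move=> HX.
have [bs Hbs] : exists bs : nat -> nat, forall i, is_cust n i -> disc i = true ->
    (1 <= bs i <= N i)%nat /\ best_window_excess a i = window_excess a i (bs i).
{ apply: (functional_choice (fun i b => is_cust n i -> disc i = true ->
            (1 <= b <= N i)%nat /\ best_window_excess a i = window_excess a i b)) => i.
  case: (classic (is_cust n i /\ disc i = true)) => [[Hi Hd]|Hnot].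
  - have [b Hb] := best_window_excess_attained a i (proj1 (proj2 Htw i Hi Hd)).
    by exists b.
  - by exists 0%nat => Hi Hd; case: Hnot. }
exists (fun i => max_scen (fun s => a s i - yhi i (bs i))),
       (fun i => max_scen (fun s => ylo i (bs i) - a s i)),
       (fun i b => if Nat.eqb b (bs i) then 1 else 0).
split; first exact: mismatch_ge0.
split; first exact: HX.
split; [|split; [|split; [|split]]].
- move=> i Hi Hd.
  split; first exact: max_scen_ge0.
  split; first exact: max_scen_ge0.
  split=> [b _ | ]; first by case: (Nat.eqb b (bs i)); [right | left].
  apply: sumR_indicator; first exact: seq_NoDup.
  by apply/in_seq1; case: (Hbs i Hi Hd).
- move=> i s b _ _ Hs _; case: (Nat.eqb_spec b (bs i)) => [-> _|_ /= H10]; last lra.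
  exact/Rle_ge/(le_max_scen (fun s => a s i - yhi i (bs i))).
- move=> i s b _ _ Hs _; case: (Nat.eqb_spec b (bs i)) => [-> _|_ /= H10]; last lra.
  exact/Rle_ge/(le_max_scen (fun s => ylo i (bs i) - a s i)).
- move=> i s1 s2 Hi Hd Hs1 Hs2; apply: Rle_ge.
  exact: Rle_trans (spread_excess_ub a i s1 s2 Hi Hd Hs1 Hs2) (Rmax_l _ _).
- apply: Rle_ge; apply: Rle_trans (Rmax_r _ _); right.
  rewrite /disc_excess; f_equal; apply: map_ext_in => i /in_disc_customers [Hi Hd].
  by have [_ ->] := Hbs i Hi Hd.
Qed.

End MILP.

End Mismatch.

Arguments mismatch_le0_iff {n S disc w N ylo yhi e l} Htw {a}.
Arguments mismatch_le_milp {n S disc w N ylo yhi e l e0 l0 theta Rs delta a muhi mulo z}.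
Arguments milp_feasible_mismatch {n S disc w N ylo yhi e l} Htw {e0 l0 theta Rs a}.

Lemma chain_ok_eq_on th (a b : nat -> R) r :
  (forall i, In i r -> a i = b i) -> chain_ok th a r -> chain_ok th b r.
Proof.
elim: r => [|x r IH] //=; case: r IH => [|y r'] IH Hab //= [Hxy Hchain].
split; first by rewrite -!Hab //=; auto.
by apply: IH => // i Hi; apply: Hab; right.
Qed.

Lemma route_ok_eq_on e0 l0 th (a b : nat -> R) r :
  (forall i, In i r -> a i = b i) -> route_ok e0 l0 th a r -> route_ok e0 l0 th b r.
Proof.
case: r => [|x r] // Hab [Hfirst [Hchain Hlast]].
have Hin_last : In (last (x :: r) 0%nat) (x :: r).
{ by rewrite {2}(@app_removelast_last _ (x :: r) 0%nat) //; apply: in_or_app; right; left. }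
split; first by rewrite -Hab //; left.
split; first exact: chain_ok_eq_on Hab Hchain.
by rewrite -Hab.
Qed.

Lemma inX_eq_on {n e0 l0 th q Rs lo hi} {a b : nat -> R} :
  route_set n q Rs -> (forall i, is_cust n i -> a i = b i) ->
  inX n e0 l0 th Rs lo hi a -> inX n e0 l0 th Rs lo hi b.
Proof.
move=> [_ [Hcust _]] Hab [Hnonneg [Hroutes Hwin]].
split; first by move=> i Hi; rewrite -Hab //; apply: Hnonneg.
split; last by move=> i Hi; rewrite -Hab //; apply: Hwin.
move=> r Hr; apply: route_ok_eq_on (Hroutes r Hr) => i Hi.
exact: Hab (Hcust r i Hr Hi).
Qed.

From mathcomp Require Import eqtype ssrnat order ssralg ssrnum interval.
From mathcomp Require Import classical_sets set_interval boolp reals.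
From mathcomp Require Import topology normedtype derive Rstruct Rstruct_topology.
Import ArrowAsProduct.
Open Scope R_scope.
Local Open Scope classical_set_scope.

Section ContinuousReal.
Context {T : topologicalType}.
Implicit Types g h : T -> R.

Lemma continuousRplus g h : continuous g -> continuous h -> continuous (fun p => g p + h p).
Proof. by move=> cg ch p; apply: (@continuousD _ R^o _ g h p); [exact: cg | exact: ch]. Qed.

Lemma continuousRopp g : continuous g -> continuous (fun p => - g p).
Proof. by move=> cg p; apply: (@continuousN _ R^o _ g p); exact: cg. Qed.

Lemma continuousRminus g h : continuous g -> continuous h -> continuous (fun p => g p - h p).
Proof. by move=> cg ch; apply: continuousRplus cg (continuousRopp _ ch). Qed.

Lemma continuousRmax g h : continuous g -> continuous h -> continuous (fun p => Rmax (g p) (h p)).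
Proof.
move=> cg ch p.
have -> : (fun q => Rmax (g q) (h q)) = (g \max h)%R by apply/funext => q; rewrite RmaxE.
exact: (@continuous_max R T g h p (cg p) (ch p)).
Qed.

Lemma continuousRmin g h : continuous g -> continuous h -> continuous (fun p => Rmin (g p) (h p)).
Proof.
move=> cg ch p.
have -> : (fun q => Rmin (g q) (h q)) = (g \min h)%R by apply/funext => q; rewrite RminE.
exact: (@continuous_min R T g h p (cg p) (ch p)).
Qed.

Lemma continuous_maxl {A : Type} (L : list A) (G : A -> T -> R) :
  (forall x, continuous (G x)) -> continuous (fun p => maxl (map (fun x => G x p) L)).
Proof.
move=> cG; elim: L => [|x L IH] /=; first exact: cst_continuous.
exact: continuousRmax.
Qed.

Lemma continuous_minl {A : Type} (L : list A) (G0 : T -> R) (G : A -> T -> R) :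
  continuous G0 -> (forall x, continuous (G x)) ->
  continuous (fun p => minl (G0 p) (map (fun x => G x p) L)).
Proof.
move=> cG0 cG; elim: L => [|x L IH] //=.
exact: continuousRmin.
Qed.

Lemma continuous_sumR {A : Type} (L : list A) (G : A -> T -> R) :
  (forall x, continuous (G x)) -> continuous (fun p => sumR (map (fun x => G x p) L)).
Proof.
move=> cG; elim: L => [|x L IH] /=; first exact: cst_continuous.
exact: continuousRplus.
Qed.

Lemma closed_Rle g h : continuous g -> continuous h -> closed [set p | g p <= h p].
Proof.
move=> cg ch.
have -> : [set p | g p <= h p] = (fun p => h p - g p) @^-1` [set x : R | (0 <= x)%R].
  apply/funext => p /=; apply/propext.
  by rewrite RminusE Num.Theory.subr_ge0; split=> /RleP.
by move: (continuousRminus _ _ ch cg) => /continuous_closedP; apply; exact: closed_ge.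
Qed.

Lemma closed_Rge g h : continuous g -> continuous h -> closed [set p | g p >= h p].
Proof.
move=> cg ch; have -> : [set p | g p >= h p] = [set p | h p <= g p].
  by apply/funext => p; apply/propext; split; [exact: Rge_le | exact: Rle_ge].
exact: closed_Rle.
Qed.

Lemma closed_forall {I : Type} (B : I -> set T) :
  (forall j, closed (B j)) -> closed [set p | forall j, B j p].
Proof.
move=> cB; have -> : [set p | forall j, B j p] = \bigcap_(j in setT) B j.
  by apply/funext => p /=; apply/propext; split=> H j //; apply: H.
exact: closed_bigI.
Qed.

Lemma closed_implies (P : Prop) (B : set T) : closed B -> closed [set p | P -> B p].
Proof.
move=> cB; case: (pselect P) => HP.
- have -> : [set p | P -> B p] = B by apply/funext => p; apply/propext; split=> [/(_ HP) | Bp _].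
  exact: cB.
- have -> : [set p | P -> B p] = setT by apply/funext => p; apply/propext; split=> // _ /HP [].
  exact: closedT.
Qed.

End ContinuousReal.

Section ClosedSchedules.

Variables (T : topologicalType) (x : T -> nat -> R).
Hypothesis x_continuous : forall i, continuous (fun p => x p i).

Lemma closed_chain_ok th r : closed [set p | chain_ok th (x p) r].
Proof.
elim: r => [|i r IH]; first exact: closedT.
case: r IH => [|j r'] IH; first exact: closedT.
apply: closedI IH; apply: closed_Rge; last exact: cst_continuous.
exact: continuousRminus.
Qed.

Lemma closed_route_ok e0 l0 th r : closed [set p | route_ok e0 l0 th (x p) r].
Proof.
case: r => [|i r]; first exact: closedT.
apply: closedI; first by apply: closed_Rge; [exact: x_continuous | exact: cst_continuous].
apply: closedI (closed_chain_ok th (i :: r)) _.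
by apply: closed_Rle; [exact: x_continuous | exact: cst_continuous].
Qed.

Lemma closed_inX n e0 l0 th Rs lo hi : closed [set p | inX n e0 l0 th Rs lo hi (x p)].
Proof.
apply: closedI; first by apply: closed_forall => i; apply: closed_implies;
  apply: closed_Rle; [exact: cst_continuous | exact: x_continuous].
apply: closedI.
- by apply: closed_forall => r; apply: closed_implies; exact: closed_route_ok.
- apply: closed_forall => i; apply: closed_implies; apply: closedI.
  + by apply: closed_Rle; [exact: cst_continuous | exact: x_continuous].
  + by apply: closed_Rle; [exact: x_continuous | exact: cst_continuous].
Qed.

End ClosedSchedules.

Lemma continuous_mismatch (T : topologicalType) (a : T -> nat -> nat -> R)
  n S disc w N ylo yhi :
  (forall s i, continuous (fun p => a p s i)) ->
  continuous (fun p => mismatch n S disc w N ylo yhi (a p)).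
Proof.
move=> ca.
have cscen (f : nat -> T -> R) :
    (forall s, continuous (f s)) -> continuous (fun p => max_scen S (fun s => f s p)).
  exact: continuous_maxl.
apply: continuousRmax.
- apply: continuous_maxl => i; apply: (cscen) => s1; apply: (cscen) => s2.
  by apply: continuousRminus; [exact: continuousRminus | exact: cst_continuous].
- apply: continuous_sumR => i.
  have cwin b : continuous (fun p => window_excess S ylo yhi (a p) i b).
    by apply: continuousRplus; apply: (cscen) => s;
      apply: continuousRminus => //; exact: cst_continuous.
  exact: (continuous_minl _ _ (fun b p => window_excess S ylo yhi (a p) i b) (cwin 1%nat) cwin).
Qed.

Lemma EVT_min_closed_in_product {I : eqType} (A : I -> set R) (X : set (I -> R))
  (f : (I -> R) -> R) :
  (forall i, compact (A i)) -> closed X -> continuous f ->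
  (exists p, (forall i, A i (p i)) /\ X p) ->
  exists p, ((forall i, A i (p i)) /\ X p) /\
    forall q, (forall i, A i (q i)) -> X q -> f p <= f q.
Proof.
move=> cA cX cf [p0 Hp0].
have Kcompact : compact ([set p | forall i, A i (p i)] `&` X).
  exact: compact_closedI (tychonoff cA) cX.
have [|p /set_mem Hp Hmin] := compact_EVT_min _ Kcompact (continuous_subspaceT cf).
  by exists p0.
by exists p; split=> // q Aq Xq; apply/RleP; apply: Hmin; apply/mem_set.
Qed.

(* Coordinates outside the scenario x customer range are pinned to [0], so that the
   feasible families become a closed subset of a product of compact sets. *)
Section Restriction.

Variables (S n : nat).

Definition relevant (c : nat * nat) : bool :=
  (Nat.leb 1 (fst c) && Nat.leb (fst c) S) && (Nat.leb 1 (snd c) && Nat.leb (snd c) n).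

Lemma relevantP s i : relevant (s, i) = true <-> is_scen S s /\ is_cust n i.
Proof.
rewrite /relevant /is_scen /is_cust !Bool.andb_true_iff !Nat.leb_le /=; tauto.
Qed.

Definition restrict (a : nat -> nat -> R) (c : nat * nat) : R :=
  if relevant c then a (fst c) (snd c) else 0.

Lemma restrictE a s i : is_scen S s -> is_cust n i -> restrict a (s, i) = a s i.
Proof. by move=> Hs Hi; rewrite /restrict (proj2 (relevantP s i) (conj Hs Hi)). Qed.

Definition window_box (e l : nat -> R) (c : nat * nat) : set R :=
  if relevant c then [set x | e (snd c) <= x <= l (snd c)] else [set 0].

Lemma compact_window_box e l c : compact (window_box e l c).
Proof.
rewrite /window_box; case: (relevant c); last exact: compact_set1.
have -> : [set x | e (snd c) <= x <= l (snd c)] = `[e (snd c), l (snd c)]%classic.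
  apply/funext => x /=; apply/propext; rewrite in_itv /=.
  by split=> [[/RleP -> /RleP ->] | /andP [/RleP H1 /RleP H2]].
exact: segment_compact.
Qed.

Lemma restrict_in_window_box e l a :
  (forall s i, is_scen S s -> is_cust n i -> e i <= a s i <= l i) ->
  forall c, window_box e l c (restrict a c).
Proof.
move=> Hrange [s i]; rewrite /window_box /restrict.
case E: (relevant (s, i)) => //=.
by have [Hs Hi] := proj1 (relevantP s i) E; apply: Hrange.
Qed.

Lemma mismatch_restrict disc w N ylo yhi a :
  mismatch n S disc w N ylo yhi (fun s i => restrict a (s, i)) = mismatch n S disc w N ylo yhi a.
Proof. by apply: mismatch_eq_on => s i Hs Hi; rewrite restrictE. Qed.

End Restriction.

Lemma feasible_family_exists n S e0 l0 Q e l theta Rs :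
  (forall s, is_scen S s -> in_calR n Q e0 l0 (theta s) e l (Rs s)) ->
  exists a : nat -> nat -> R, forall s, is_scen S s -> inX n e0 l0 (theta s) (Rs s) e l (a s).
Proof.
move=> HR.
apply: (functional_choice (fun (s : nat) (a : nat -> R) =>
  is_scen S s -> inX n e0 l0 (theta s) (Rs s) e l a)) => s.
case: (pselect (is_scen S s)) => [Hs | Hs]; last by exists (fun _ => 0).
by have [_ [_ [a Ha]]] := HR s Hs; exists a.
Qed.

Lemma mismatch_attains_min n S e0 l0 Q e l disc w N ylo yhi theta Rs :
  (forall s, is_scen S s -> in_calR n Q e0 l0 (theta s) e l (Rs s)) ->
  exists a, (forall s, is_scen S s -> inX n e0 l0 (theta s) (Rs s) e l (a s)) /\
    forall a', (forall s, is_scen S s -> inX n e0 l0 (theta s) (Rs s) e l (a' s)) ->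
      mismatch n S disc w N ylo yhi a <= mismatch n S disc w N ylo yhi a'.
Proof.
move=> HR.
pose feasible (p : nat * nat -> R) :=
  forall s, is_scen S s -> inX n e0 l0 (theta s) (Rs s) e l (fun i => p (s, i)).
have Hrestrict a : (forall s, is_scen S s -> inX n e0 l0 (theta s) (Rs s) e l (a s)) ->
    (forall c, window_box S n e l c (restrict S n a c)) /\ feasible (restrict S n a).
{ move=> Ha; split.
  - by apply: restrict_in_window_box => s i Hs; apply: (proj2 (proj2 (Ha s Hs))).
  - move=> s Hs; apply: inX_eq_on (proj1 (HR s Hs)) _ (Ha s Hs).
    by move=> i Hi; rewrite restrictE. }
have closed_feasible : closed feasible.
{ apply: closed_forall => s; apply: closed_implies.
  by apply: (closed_inX _ (fun p i => p (s, i))) => i; apply: proj_continuous. }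
have continuous_objective :
    continuous (fun p : nat * nat -> R => mismatch n S disc w N ylo yhi (fun s i => p (s, i))).
{ by apply: continuous_mismatch => s i; apply: proj_continuous. }
have [a0 /Hrestrict Ha0] := feasible_family_exists n S e0 l0 Q e l theta Rs HR.
have [p [[_ Hp] Hmin]] := EVT_min_closed_in_product _ _ _ (compact_window_box S n e l)
  closed_feasible continuous_objective (ex_intro _ (restrict S n a0) Ha0).
exists (fun s i => p (s, i)); split=> // a' Ha'.
rewrite -(mismatch_restrict S n disc w N ylo yhi a').
by have [Hbox HX] := Hrestrict a' Ha'; apply: Hmin.
Qed.

Theorem mainTheorem3
  (n : nat) (e0 l0 Q : R) (e l : nat -> R)
  (disc : nat -> bool) (w : nat -> R) (N : nat -> nat) (ylo yhi : nat -> nat -> R)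
  (S : nat) (theta : nat -> param) (Rs : nat -> list (list nat))
  (Htw : tw_ok n e l disc w N ylo yhi)
  (Hpar : forall s, is_scen S s -> param_ok n (theta s))
  (HR : forall s, is_scen S s -> in_calR n Q e0 l0 (theta s) e l (Rs s)) :
  exists dstar : R,
    (exists a muhi mulo z,
       milp_feasible n e0 l0 e l disc w N ylo yhi S theta Rs dstar a muhi mulo z) /\
    (forall delta a muhi mulo z,
       milp_feasible n e0 l0 e l disc w N ylo yhi S theta Rs delta a muhi mulo z ->
       dstar <= delta) /\
    (dstar = 0 <->
     exists a : nat -> nat -> R,
       (forall s, is_scen S s -> inX n e0 l0 (theta s) (Rs s) e l (a s)) /\
       consistent n disc w N ylo yhi S a).
Proof.
have [astar [Hastar Hmin]] := mismatch_attains_min n S e0 l0 Q e l disc w N ylo yhi theta Rs HR.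
have Hrange a : (forall s, is_scen S s -> inX n e0 l0 (theta s) (Rs s) e l (a s)) ->
    forall s i, is_scen S s -> is_cust n i -> e i <= a s i <= l i.
{ by move=> Ha s i Hs; apply: (proj2 (proj2 (Ha s Hs))). }
exists (mismatch n S disc w N ylo yhi astar); split; [|split].
- have [muhi [mulo [z Hfeas]]] := milp_feasible_mismatch Htw Hastar.
  by exists astar, muhi, mulo, z.
- move=> delta a muhi mulo z Hfeas.
  exact: Rle_trans (Hmin a (proj1 (proj2 Hfeas))) (mismatch_le_milp Hfeas).
- split=> [Hzero | [a [Ha Hcons]]].
  + exists astar; split=> //.
    by apply/(mismatch_le0_iff Htw (Hrange astar Hastar)); rewrite Hzero; apply: Rle_refl.
  + apply: Rle_antisym; last exact: mismatch_ge0.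
    apply: Rle_trans (Hmin a Ha) _.
    exact/(mismatch_le0_iff Htw (Hrange a Ha)).
Qed.
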